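(* Let $\mathcal X,\mathcal Y$ be complex Hilbert spaces and $A:\mathcal X\supset\operatorname{dom}A\to\mathcal Y$ a closed, densely defined linear operator with $\|Ax\|_{\mathcal Y}\ge c\|x\|_{\mathcal X}$ for some $c>0$ and all $x\in\operatorname{dom}A$. Let $\mathcal X_h$ denote $\operatorname{dom}A$ with inner product $\langle x,y\rangle_{\mathcal X_h}=\langle Ax,Ay\rangle_{\mathcal Y}$, and $\mathcal Z_h:=\mathcal X_h\times\mathcal X$ with the product inner product. Let $B:\mathcal Y\supset\operatorname{dom}B\to\mathcal X$ be closed, densely defined, with $A^*\subset-B$. Define $\mathcal A:\mathcal Z_h\supset\operatorname{dom}\mathcal A\to\mathcal Z_h$ by $\operatorname{dom}\mathcal A=\{(z_1,z_2)\in\mathcal X_h\times\mathcal X_h:\ Az_1\in\operatorname{dom}B\}$, $\mathcal A(z_1,z_2)=(z_2,\,BAz_1)$, and $\mathcal A_{\mathrm s}:\mathcal Z_h\supset\operatorname{dom}\mathcal A_{\mathrm s}\to\mathcal Z_h$ by $\operatorname{dom}\mathcal A_{\mathrm s}=\{(z_1,z_2)\in\mathcal X_h\times\mathcal X_h:\ z_1\in\operatorname{dom}(A^*A)\}$, $\mathcal A_{\mathrm s}(z_1,z_2)=(z_2,\,-A^*Az_1)$. Then $\mathcal A$ is densely defined and closed in $\mathcal Z_h$, $\mathcal A_{\mathrm s}\subset\mathcal A$, and $\mathcal A^*\subset-\mathcal A$ (adjoint taken in $\mathcal Z_h$).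
   Context: $\mathcal X_h$ is a Hilbert space (its norm equals $\|(A^*A)^{1/2}\cdot\|_{\mathcal X}$). For operators, $T_1\subset T_2$ means $T_2$ extends $T_1$. The domain of $\mathcal A_{\mathrm s}$ is equivalently the set of $(z_1,z_2)\in\mathcal X_h\times\mathcal X_h$ for which the functional $y\mapsto\langle Az_1,Ay\rangle_{\mathcal Y}$ on $\mathcal X_h$ is represented by an element of $\mathcal X$ (i.e. $Sz_1\in\mathcal X$ for the extension $S:\mathcal X_h\to\mathcal X_h^*$ of $A^*A$). *)

From HB Require Import structures.
From mathcomp Require Import all_boot all_order all_algebra.
From mathcomp Require Import reals.
From mathcomp.real_closed Require Import complex.
Set Implicit Arguments. Unset Strict Implicit. Unset Printing Implicit Defensive.
Import Order.TTheory GRing.Theory Num.Theory.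
Local Open Scope ring_scope.

Section Hilb.
Variable R : realType.
Local Notation C := (R[i]).

Definition is_inner_product (V : lmodType C) (ip : V -> V -> C) : Prop :=
  [/\ (forall (a : C) (x y z : V), ip (a *: x + y) z = a * ip x z + ip y z),
      (forall x y : V, ip y x = conjc (ip x y)),
      (forall x : V, 0 <= ip x x) &
      (forall x : V, ip x x = 0 -> x = 0)].

Definition nrm (V : lmodType C) (ip : V -> V -> C) (x : V) : R :=
  Num.sqrt (complex.Re (ip x x)).

Definition cvg_ip (V : lmodType C) (ip : V -> V -> C) (u : nat -> V) (l : V) :=
  forall e : R, 0 < e -> exists N : nat, forall n, (N <= n)%N -> nrm ip (u n - l) < e.

Definition cauchy_ip (V : lmodType C) (ip : V -> V -> C) (u : nat -> V) :=
  forall e : R, 0 < e -> exists N : nat, forall m n, (N <= m)%N -> (N <= n)%N ->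
    nrm ip (u m - u n) < e.

Definition is_hilbert (V : lmodType C) (ip : V -> V -> C) : Prop :=
  is_inner_product ip /\
  forall u : nat -> V, cauchy_ip ip u -> exists l, cvg_ip ip u l.

Definition is_lin_op (V W : lmodType C) (dom : V -> Prop) (f : V -> W) : Prop :=
  [/\ dom 0,
      (forall (a : C) x y, dom x -> dom y -> dom (a *: x + y)) &
      (forall (a : C) x y, dom x -> dom y -> f (a *: x + y) = a *: f x + f y)].

Definition dense_in (V : lmodType C) (ip : V -> V -> C) (S dom : V -> Prop) :=
  forall x, S x -> forall e : R, 0 < e -> exists y, dom y /\ nrm ip (x - y) < e.

Definition closed_op_in (V : lmodType C) (ip : V -> V -> C) (S dom : V -> Prop)
  (f : V -> V) :=
  forall (u : nat -> V) x y, (forall n, dom (u n)) -> S x -> S y ->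
    cvg_ip ip u x -> cvg_ip ip (fun n => f (u n)) y -> dom x /\ f x = y.

Definition closed_op (V W : lmodType C) (ipV : V -> V -> C) (ipW : W -> W -> C)
  (dom : V -> Prop) (f : V -> W) :=
  forall (u : nat -> V) x y, (forall n, dom (u n)) ->
    cvg_ip ipV u x -> cvg_ip ipW (fun n => f (u n)) y -> dom x /\ f x = y.

(* graph of the Hilbert-space adjoint of f : V ⊃ dom -> W:
   (y, z) is in the graph of f^* iff <f x, y>_W = <x, z>_V for all x in dom *)
Definition adj_graph (V W : lmodType C) (ipV : V -> V -> C) (ipW : W -> W -> C)
  (dom : V -> Prop) (f : V -> W) (y : W) (z : V) : Prop :=
  forall x, dom x -> ipW (f x) y = ipV x z.

(* The space Z_h = X_h x X, realised as the subset {(z1,z2) | z1 \in dom A}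
   of X x X, with inner product <(x1,x2),(y1,y2)> = <A x1, A y1>_Y + <x2,y2>_X. *)
Definition Zh_set (X : lmodType C) (domA : X -> Prop) (p : X * X) : Prop := domA p.1.

Definition Zh_ip (X Y : lmodType C) (ipX : X -> X -> C) (ipY : Y -> Y -> C)
  (A : X -> Y) (p q : X * X) : C := ipY (A p.1) (A q.1) + ipX p.2 q.2.

Definition calA_dom (X Y : lmodType C) (domA : X -> Prop) (A : X -> Y)
  (domB : Y -> Prop) (p : X * X) : Prop :=
  [/\ domA p.1, domA p.2 & domB (A p.1)].

Definition calA (X Y : lmodType C) (A : X -> Y) (B : Y -> X) (p : X * X) : X * X :=
  (p.2, B (A p.1)).

End Hilb.

From HB Require Import structures.
From mathcomp Require Import all_boot all_order all_algebra.
From mathcomp Require Import reals.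
From mathcomp.real_closed Require Import complex.
From mathcomp Require Import boolp classical_sets.
From mathcomp.algebra_tactics Require Import ring lra.
Import Order.TTheory GRing.Theory Num.Theory.
Local Open Scope ring_scope.
Local Open Scope complex_scope.

Set Implicit Arguments. Unset Strict Implicit. Unset Printing Implicit Defensive.

(* Coercivity makes the energy norm |A z|_Y dominate |z|_X, and closedness of
   A then makes X_h complete. Riesz representation in X_h, applied to the
   bounded functional z |-> <z, f>_X, solves A^*A u = f for every f in X, so
   {z in dom A | A z in dom B}, which contains dom (A^*A), has trivial
   orthogonal complement in X_h and is dense there; this gives density of
   dom cal A. Closedness of cal A follows componentwise from closedness of B
   and uniqueness of limits in X. If (v, w) is in the graph of cal A^*,
   testing against (0, x) puts (A v1, w2) in the graph of A^* (so in -B),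
   and testing against (u, 0) with A^*A u = v2 + w1 forces v2 + w1 = 0.
   Since X_h is a subset of X rather than a type, the Hilbert-space facts
   (Cauchy-Schwarz, projection onto the closure of a subspace, Riesz) are
   proved for an inner product given on a subspace S of an ambient module. *)

Section ComplexFacts.
Variable R : rcfType.
Implicit Types w z : R[i].

Lemma Re_conjc w : complex.Re (conjc w) = complex.Re w.
Proof. by case: w. Qed.

Definition sqrmodc w : R := complex.Re w ^+ 2 + complex.Im w ^+ 2.

Lemma mulcJ_sqrmodc w : w * conjc w = (sqrmodc w)%:C.
Proof.
case: w => a b; apply/eqP; rewrite eq_complex /sqrmodc /=.
by apply/andP; split; apply/eqP; ring.
Qed.

Lemma sqrmodc_ge0 w : 0 <= sqrmodc w.
Proof. by rewrite addr_ge0 ?sqr_ge0. Qed.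

Lemma sqrmodc_le0 w : (sqrmodc w <= 0) = (w == 0).
Proof.
rewrite le_eqVlt ltNge sqrmodc_ge0 orbF; case: w => a b.
by rewrite /sqrmodc eq_complex /= paddr_eq0 ?sqr_ge0 // !sqrf_eq0.
Qed.

Lemma sqrmodcM w z : sqrmodc (w * z) = sqrmodc w * sqrmodc z.
Proof. by case: w => a b; case: z => c d; rewrite /sqrmodc /=; ring. Qed.

Lemma sqrmodc_real (x : R) : sqrmodc x%:C = x ^+ 2.
Proof. by rewrite /sqrmodc /= expr0n addr0. Qed.

Lemma sqrRe_le_sqrmodc w : complex.Re w ^+ 2 <= sqrmodc w.
Proof. by rewrite lerDl sqr_ge0. Qed.

End ComplexFacts.

Section RealFacts.
Variable R : realType.

Lemma eventually_inv_lt (e : R) : 0 < e ->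
  exists N, forall n, (N <= n)%N -> n.+1%:R^-1 < e.
Proof.
move=> e_gt0; have [N] := ltr_add_invr e_gt0; rewrite add0r => hN.
exists N => n leNn; apply: le_lt_trans hN.
by rewrite lef_pV2 ?posrE // ler_nat.
Qed.

Lemma le_of_quadratic_ge0 (a b q : R) : 0 <= b -> 0 <= q ->
  (forall t, 0 <= a - 2 * t * q + t ^+ 2 * q * b) -> q <= a * b.
Proof.
move=> b_ge0 q_ge0 hquad.
have [b_gt0|b_lt0|b0] := ltrgtP 0 b; last first.
- rewrite -b0 mulr0 leNgt; apply/negP => q_gt0.
  have := hquad ((a + 1) / (2 * q)); rewrite -b0 mulr0 addr0.
  have -> : 2 * ((a + 1) / (2 * q)) * q = a + 1 by field; rewrite gt_eqF.
  lra.
- by move: b_ge0; rewrite leNgt b_lt0.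
have := hquad b^-1; rewrite -(ler_pM2r b_gt0) mul0r.
have -> : (a - 2 * b^-1 * q + b^-1 ^+ 2 * q * b) * b = a * b - q by field; rewrite gt_eqF.
by rewrite subr_ge0.
Qed.

End RealFacts.

Section Subspace.
Variables (R : realType) (V : lmodType R[i]).

Definition is_subspace (S : V -> Prop) :=
  S 0 /\ forall (a : R[i]) x y, S x -> S y -> S (a *: x + y).

Variables (S : V -> Prop) (hS : is_subspace S).

Lemma subspaceD x y : S x -> S y -> S (x + y).
Proof. by move=> Sx Sy; have := hS.2 1 _ _ Sx Sy; rewrite scale1r. Qed.

Lemma subspaceZ a x : S x -> S (a *: x).
Proof. by move=> Sx; have := hS.2 a _ _ Sx hS.1; rewrite addr0. Qed.

Lemma subspaceN x : S x -> S (- x).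
Proof. by move=> Sx; rewrite -scaleN1r; apply: subspaceZ. Qed.

Lemma subspaceB x y : S x -> S y -> S (x - y).
Proof. by move=> Sx Sy; apply: subspaceD => //; apply: subspaceN. Qed.

End Subspace.

Section LinearOperator.
Variables (R : realType) (V W : lmodType R[i]) (dom : V -> Prop) (f : V -> W).
Hypothesis linf : is_lin_op dom f.

Lemma lin_op_subspace : is_subspace dom.
Proof. by case: linf. Qed.

Lemma lin_opD x y : dom x -> dom y -> f (x + y) = f x + f y.
Proof. by case: linf => _ _ flin Dx Dy; have := flin 1 _ _ Dx Dy; rewrite !scale1r. Qed.

Lemma lin_op0 : f 0 = 0.
Proof.
by case: linf => D0 _ _; apply: (addrI (f 0)); rewrite -lin_opD // !addr0.
Qed.

Lemma lin_opZ a x : dom x -> f (a *: x) = a *: f x.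
Proof.
case: linf => D0 _ flin Dx; have := flin a _ _ Dx D0.
by rewrite !addr0 lin_op0 addr0.
Qed.

Lemma lin_opB x y : dom x -> dom y -> f (x - y) = f x - f y.
Proof.
have hD := lin_op_subspace.
move=> Dx Dy; rewrite lin_opD //; last exact: subspaceN.
by rewrite -scaleN1r lin_opZ // scaleN1r.
Qed.

End LinearOperator.

Section InnerProductOn.
Variables (R : realType) (V : lmodType R[i]).
Implicit Types (S : V -> Prop) (ip : V -> V -> R[i]).

Definition is_inner_product_on S ip :=
  [/\ is_subspace S,
      forall (a : R[i]) x y z, S x -> S y -> S z -> ip (a *: x + y) z = a * ip x z + ip y z,
      forall x y, S x -> S y -> ip y x = conjc (ip x y),
      forall x, S x -> 0 <= ip x x &
      forall x, S x -> ip x x = 0 -> x = 0].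

Definition complete_on S ip :=
  forall u, (forall n, S (u n)) -> cauchy_ip ip u -> exists2 l, S l & cvg_ip ip u l.

Definition sqnrm ip x : R := complex.Re (ip x x).

Definition adherent ip (M : V -> Prop) x :=
  forall e : R, 0 < e -> exists m, M m /\ nrm ip (x - m) < e.

Lemma inner_product_onT ip : is_inner_product ip -> is_inner_product_on (fun=> True) ip.
Proof.
case=> linip symip posip defip.
by split=> [|a x y z _ _ _|x y _ _|x _|x _]; [split | apply: linip | apply: symip | apply: posip | apply: defip].
Qed.

Lemma hilbert_completeT ip : is_hilbert ip -> complete_on (fun=> True) ip.
Proof. by case=> _ compl u _ /compl[l]; exists l. Qed.

Lemma nrm_ge0 ip x : 0 <= nrm ip x.
Proof. exact: sqrtr_ge0. Qed.

Lemma nrm_lt ip x (e : R) : 0 < e -> (nrm ip x < e) = (sqnrm ip x < e ^+ 2).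
Proof.
move=> e_gt0; rewrite /nrm -/(sqnrm ip x) -{1}(gtr0_norm e_gt0) -sqrtr_sqr.
have [sq_lt0|sq_ge0] := ltP (sqnrm ip x) 0; last by rewrite ltr_sqrt ?exprn_gt0.
rewrite ltr0_sqrtr // sqrtr_gt0 exprn_gt0 //; symmetry.
by apply: lt_le_trans sq_lt0 _; exact: sqr_ge0.
Qed.

Variables (S : V -> Prop) (ip : V -> V -> R[i]).
Hypothesis hip : is_inner_product_on S ip.

Let hS : is_subspace S. Proof. by case: hip. Qed.
Let SD := subspaceD hS.
Let SZ := subspaceZ hS.
Let SN := subspaceN hS.
Let SB := subspaceB hS.

Lemma ipDl x y z : S x -> S y -> S z -> ip (x + y) z = ip x z + ip y z.
Proof. by case: hip => _ iplin _ _ _ Sx Sy Sz; have := iplin 1 _ _ _ Sx Sy Sz; rewrite scale1r mul1r. Qed.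

Lemma ip0l z : S z -> ip 0 z = 0.
Proof. by case: hS => S0 _ Sz; apply: (addrI (ip 0 z)); rewrite -ipDl // !addr0. Qed.

Lemma ipZl a x z : S x -> S z -> ip (a *: x) z = a * ip x z.
Proof.
case: hip => [[S0 _] iplin _ _ _] Sx Sz; have := iplin a _ _ _ Sx S0 Sz.
by rewrite !addr0 ip0l // addr0.
Qed.

Lemma ipNl x z : S x -> S z -> ip (- x) z = - ip x z.
Proof. by move=> Sx Sz; rewrite -scaleN1r ipZl // mulN1r. Qed.

Lemma ipBl x y z : S x -> S y -> S z -> ip (x - y) z = ip x z - ip y z.
Proof. by move=> Sx Sy Sz; rewrite ipDl ?ipNl //; exact: SN. Qed.

Lemma ipC x y : S x -> S y -> ip y x = conjc (ip x y).
Proof. by case: hip => _ _ ipsym _ _; exact: ipsym. Qed.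

Lemma ipDr x y z : S x -> S y -> S z -> ip z (x + y) = ip z x + ip z y.
Proof. by move=> Sx Sy Sz; rewrite (ipC (SD Sx Sy) Sz) ipDl // rmorphD /= -(ipC Sx Sz) -(ipC Sy Sz). Qed.

Lemma ipZr a x z : S x -> S z -> ip z (a *: x) = conjc a * ip z x.
Proof. by move=> Sx Sz; rewrite (ipC (SZ a Sx) Sz) ipZl // rmorphM /= -(ipC Sx Sz). Qed.

Lemma ipNr x z : S x -> S z -> ip z (- x) = - ip z x.
Proof. by move=> Sx Sz; rewrite (ipC (SN Sx) Sz) ipNl // rmorphN /= -(ipC Sx Sz). Qed.

Lemma ip0r z : S z -> ip z 0 = 0.
Proof. by move=> Sz; rewrite -(scale0r 0) ipZr ?rmorph0 ?mul0r //; case: hS. Qed.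

Lemma ip_sqnrm x : S x -> ip x x = (sqnrm ip x)%:C.
Proof.
case: hip => _ _ _ ippos _ /ippos; rewrite /sqnrm.
by case: (ip x x) => a b; rewrite lecE /= => /andP[/eqP ->].
Qed.

Lemma sqnrm_ge0 x : S x -> 0 <= sqnrm ip x.
Proof. by move=> Sx; rewrite -ler0c -ip_sqnrm //; case: hip => _ _ _ ->. Qed.

Lemma sqnrm_le0 x : S x -> sqnrm ip x <= 0 -> x = 0.
Proof.
move=> Sx le0; case: hip => _ _ _ _ ipdef; apply: ipdef => //.
rewrite ip_sqnrm //.
by have -> : sqnrm ip x = 0 by apply/eqP; rewrite eq_le le0 sqnrm_ge0.
Qed.

Lemma sqnrmD x y : S x -> S y ->
  sqnrm ip (x + y) = sqnrm ip x + sqnrm ip y + 2 * complex.Re (ip x y).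
Proof.
move=> Sx Sy; rewrite /sqnrm ipDl ?ipDr ?raddfD //=; last exact: SD.
by rewrite (ipC Sx Sy) Re_conjc; ring.
Qed.

Lemma sqnrmN x : S x -> sqnrm ip (- x) = sqnrm ip x.
Proof. by move=> Sx; rewrite /sqnrm ipNl ?ipNr ?opprK //; exact: SN. Qed.

Lemma sqnrmB x y : S x -> S y ->
  sqnrm ip (x - y) = sqnrm ip x + sqnrm ip y - 2 * complex.Re (ip x y).
Proof. by move=> Sx Sy; rewrite sqnrmD ?sqnrmN ?ipNr ?raddfN //=; [ring | exact: SN]. Qed.

Lemma sqnrmZ a x : S x -> sqnrm ip (a *: x) = sqrmodc a * sqnrm ip x.
Proof.
move=> Sx; rewrite /sqnrm ipZl ?ipZr ?mulrA ?mulcJ_sqrmodc ?ip_sqnrm //; last exact: SZ.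
by rewrite -rmorphM.
Qed.

Lemma sqnrm_parallelogram x y : S x -> S y ->
  sqnrm ip (x - y) + sqnrm ip (x + y) = 2 * sqnrm ip x + 2 * sqnrm ip y.
Proof. by move=> Sx Sy; rewrite sqnrmB // sqnrmD //; ring. Qed.

Lemma sqnrm_sub_along x y (t : R) : S x -> S y ->
  sqnrm ip (x - (t%:C * ip x y) *: y) =
  sqnrm ip x - 2 * t * sqrmodc (ip x y) + t ^+ 2 * sqrmodc (ip x y) * sqnrm ip y.
Proof.
move=> Sx Sy; rewrite sqnrmB ?sqnrmZ ?ipZr //; last exact: SZ.
have -> : conjc (t%:C * ip x y) * ip x y = (t * sqrmodc (ip x y))%:C.
  case: (ip x y) => a b; apply/eqP; rewrite eq_complex /sqrmodc /=.
  by apply/andP; split; apply/eqP; ring.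
by rewrite sqrmodcM sqrmodc_real /=; ring.
Qed.

Lemma cauchy_schwarz x y : S x -> S y -> sqrmodc (ip x y) <= sqnrm ip x * sqnrm ip y.
Proof.
move=> Sx Sy; apply: le_of_quadratic_ge0; rewrite ?sqnrm_ge0 ?sqrmodc_ge0 // => t.
rewrite -sqnrm_sub_along //; apply: sqnrm_ge0; apply: SB => //; exact: SZ.
Qed.

Lemma ip_eq0_of_min x y : S x -> S y ->
  (forall t : R, sqnrm ip x <= sqnrm ip (x - (t%:C * ip x y) *: y)) -> ip x y = 0.
Proof.
move=> Sx Sy xmin; apply/eqP; rewrite -sqrmodc_le0 -(mul0r (sqnrm ip y)).
apply: le_of_quadratic_ge0; rewrite ?sqnrm_ge0 ?sqrmodc_ge0 // => t.
by have := xmin t; rewrite sqnrm_sub_along //; lra.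
Qed.

Lemma sqr_nrm x : S x -> nrm ip x ^+ 2 = sqnrm ip x.
Proof. by move=> Sx; rewrite sqr_sqrtr ?sqnrm_ge0. Qed.

Lemma nrmN x : S x -> nrm ip (- x) = nrm ip x.
Proof. by move=> Sx; rewrite /nrm -!/(sqnrm ip _) sqnrmN. Qed.

Lemma nrmB_sym x y : S x -> S y -> nrm ip (x - y) = nrm ip (y - x).
Proof. by move=> Sx Sy; rewrite -nrmN ?opprB //; exact: SB. Qed.

Lemma Re_ip_le_nrm x y : S x -> S y -> complex.Re (ip x y) <= nrm ip x * nrm ip y.
Proof.
move=> Sx Sy; have [Re_le0|Re_gt0] := lerP (complex.Re (ip x y)) 0.
  by apply: le_trans Re_le0 _; rewrite mulr_ge0 ?nrm_ge0.
rewrite -ler_sqr ?nnegrE ?mulr_ge0 ?nrm_ge0 ?(ltW Re_gt0) // exprMn !sqr_nrm //.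
exact: le_trans (sqrRe_le_sqrmodc _) (cauchy_schwarz Sx Sy).
Qed.

Lemma nrmD_le x y : S x -> S y -> nrm ip (x + y) <= nrm ip x + nrm ip y.
Proof.
move=> Sx Sy; rewrite -ler_sqr ?nnegrE ?addr_ge0 ?nrm_ge0 //.
rewrite sqr_nrm ?sqnrmD -?sqr_nrm //; last exact: SD.
by have := Re_ip_le_nrm Sx Sy; lra.
Qed.

Lemma nrm_sub_le x y z : S x -> S y -> S z ->
  nrm ip (x - z) <= nrm ip (x - y) + nrm ip (y - z).
Proof.
move=> Sx Sy Sz; have -> : x - z = (x - y) + (y - z) by rewrite addrA subrK.
by apply: nrmD_le; exact: SB.
Qed.

Lemma cvg_ip_unique u a b : (forall n, S (u n)) -> S a -> S b ->
  cvg_ip ip u a -> cvg_ip ip u b -> a = b.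
Proof.
move=> Su Sa Sb ua ub; apply/eqP; rewrite -subr_eq0; apply/eqP/sqnrm_le0; first exact: SB.
rewrite -sqr_nrm; last exact: SB.
suff : nrm ip (a - b) <= 0 by have := nrm_ge0 ip (a - b); nra.
apply/ler_addgt0Pr => e e_gt0; rewrite add0r.
have [N1 hN1] := ua _ (divr_gt0 e_gt0 (ltr0Sn _ 1)).
have [N2 hN2] := ub _ (divr_gt0 e_gt0 (ltr0Sn _ 1)).
pose n := maxn N1 N2; rewrite (le_trans (nrm_sub_le Sa (Su n) Sb)) //.
rewrite nrmB_sym // [e]splitr; apply: lerD; apply/ltW.
  by apply: hN1; exact: leq_maxl.
by apply: hN2; exact: leq_maxr.
Qed.

Section Complete.
Hypothesis complete : complete_on S ip.

Section Projection.
Variables (M : V -> Prop) (p : V).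
Hypotheses (hM : is_subspace M) (MS : forall x, M x -> S x) (Sp : S p).

Let dist := inf [set nrm ip (p - m) | m in M].

Let has_inf_dist : has_inf [set nrm ip (p - m) | m in M].
Proof.
split; first by exists (nrm ip (p - 0)), 0 => //; case: hM.
by exists 0 => _ [m _ <-]; exact: nrm_ge0.
Qed.

Let dist_ge0 : 0 <= dist.
Proof. by apply: lb_le_inf; [case: has_inf_dist | move=> _ [m _ <-]; exact: nrm_ge0]. Qed.

Lemma dist_le m : M m -> dist <= nrm ip (p - m).
Proof. by move=> Mm; apply: (ge_inf has_inf_dist.2); exists m. Qed.

Lemma dist_le_adherent z : S z -> adherent ip M z -> dist <= nrm ip (p - z).
Proof.
move=> Sz zM; apply/ler_addgt0Pr => e e_gt0.
have [m [Mm zm_lt]] := zM e e_gt0.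
apply: le_trans (dist_le Mm) _; apply: le_trans (nrm_sub_le Sp Sz (MS Mm)) _.
by rewrite lerD2l ltW.
Qed.

Lemma sqnrm_sub_le_dist m m' : M m -> M m' ->
  sqnrm ip (m - m') <= 2 * nrm ip (p - m) ^+ 2 + 2 * nrm ip (p - m') ^+ 2 - 4 * dist ^+ 2.
Proof.
move=> Mm Mm'; have [Sm Sm'] := (MS Mm, MS Mm').
have Spm := SB Sp Sm; have Spm' := SB Sp Sm'.
pose mid := (2%:R : R[i])^-1 *: (m + m').
have Mmid : M mid by rewrite /mid -[_ *: _]addr0; apply: hM.2; [apply: subspaceD | case: hM].
have two_mid : (p - m') + (p - m) = (2%:R : R[i]) *: (p - mid).
  rewrite scalerBr scalerA mulfV ?pnatr_eq0 // scale1r scaler_nat mulr2n opprD addrACA.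
  by rewrite (addrC (- m')).
have := sqnrm_parallelogram Spm' Spm; rewrite two_mid sqnrmZ; last exact/SB/MS.
have -> : p - m' - (p - m) = m - m' by rewrite opprB addrC addrA subrK.
have -> : sqrmodc (2%:R : R[i]) = 4 by rewrite -(rmorph_nat (real_complex R)) sqrmodc_real; ring.
rewrite -(sqr_nrm Spm) -(sqr_nrm Spm') -(sqr_nrm (SB Sp (MS Mmid))).
have : dist ^+ 2 <= nrm ip (p - mid) ^+ 2.
  by rewrite ler_sqr ?nnegrE ?nrm_ge0 ?dist_le.
lra.
Qed.

Lemma minimizing_cauchy (m : nat -> V) : (forall k, M (m k)) ->
  (forall k, nrm ip (p - m k) < dist + k.+1%:R^-1) -> cauchy_ip ip m.
Proof.
move=> Mm mmin e e_gt0; have d_ge0 := dist_ge0.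
have c_gt0 : 0 < 8 * dist + 4 by lra.
have eta_gt0 : 0 < e ^+ 2 / (8 * dist + 4) by rewrite divr_gt0 ?exprn_gt0.
have [N hN] := eventually_inv_lt eta_gt0.
(* From dist <= a < dist + d and d <= 1: a^2 - dist^2 < d (2 dist + 1). *)
have near k : (N <= k)%N -> 4 * (nrm ip (p - m k) ^+ 2 - dist ^+ 2) < e ^+ 2.
  move=> leNk; set a := nrm ip (p - m k); set d := (k.+1%:R^-1 : R).
  have d_le1 : d <= 1 by rewrite invf_le1 ?ler1n ?ltr0Sn.
  have d_gt0 : 0 < d by rewrite invr_gt0 ltr0Sn.
  have : d * (8 * dist + 4) < e ^+ 2 by rewrite -ltr_pdivlMr ?hN.
  have := dist_le (Mm k); have := mmin k; rewrite -/a -/d; nra.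
exists N => i j leNi leNj; rewrite nrm_lt //.
apply: le_lt_trans (sqnrm_sub_le_dist (Mm i) (Mm j)) _.
by have := near i leNi; have := near j leNj; lra.
Qed.

Lemma orthogonal_projection :
  exists l, [/\ S l, adherent ip M l & forall y, M y -> ip y (p - l) = 0].
Proof.
have approx k : exists m, M m /\ nrm ip (p - m) < dist + k.+1%:R^-1.
  have k_gt0 : 0 < k.+1%:R^-1 :> R by rewrite invr_gt0 ltr0Sn.
  by have [_ [m Mm <-] lt] := inf_adherent k_gt0 has_inf_dist; exists m.
have [m hm] := choice approx.
have [Mm mmin] := (fun k => (hm k).1, fun k => (hm k).2).
have [l Sl ml] := complete (fun k => MS (Mm k)) (minimizing_cauchy Mm mmin).
have Spl := SB Sp Sl.
have l_adh : adherent ip M l.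
  move=> e /ml[N hN]; exists (m N); split; first exact: Mm.
  by rewrite nrmB_sym ?hN //; exact: MS.
have pl_le_dist : nrm ip (p - l) <= dist.
  apply/ler_addgt0Pr => e e_gt0; have e2_gt0 : 0 < e / 2 by rewrite divr_gt0.
  have [N1 hN1] := ml _ e2_gt0; have [N2 hN2] := eventually_inv_lt e2_gt0.
  pose k := maxn N1 N2; apply: le_trans (nrm_sub_le Sp (MS (Mm k)) Sl) _.
  have := mmin k; have := hN1 k (leq_maxl _ _); have := hN2 k (leq_maxr _ _).
  set d := (k.+1%:R^-1 : R); lra.
(* [p - l] has norm at most [dist], which no [p - (l + s *: y)] undercuts. *)
exists l; split=> // y My; have Sy := MS My.
rewrite ipC // (ip_eq0_of_min Spl Sy) ?conjc0 // => t.
set s := t%:C * ip (p - l) y.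
have ls_adh : adherent ip M (l + s *: y).
  move=> e /l_adh[m' [Mm' lt]]; exists (s *: y + m'); split; first exact: hM.2.
  by rewrite [s *: y + _]addrC opprD addrACA subrr addr0.
have Sls : S (l + s *: y) by apply: SD => //; exact: SZ.
have := dist_le_adherent Sls ls_adh; rewrite opprD addrA => le_dist.
rewrite -!sqr_nrm ?ler_sqr ?nnegrE ?nrm_ge0 //; last by apply: SB => //; exact: SZ.
exact: le_trans pl_le_dist le_dist.
Qed.

End Projection.

Lemma dense_of_orthogonal_trivial (M : V -> Prop) : is_subspace M -> (forall x, M x -> S x) ->
  (forall r, S r -> (forall y, M y -> ip y r = 0) -> r = 0) -> dense_in ip S M.
Proof.
move=> hM MS Mperp p Sp; have [l [Sl l_adh lperp]] := orthogonal_projection hM MS Sp.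
by have /eqP := Mperp _ (SB Sp Sl) lperp; rewrite subr_eq0 => /eqP ->.
Qed.

Section BoundedFunctional.
Variables (phi : V -> R[i]^o) (K : R).
Hypotheses (linphi : is_lin_op S phi) (K_ge0 : 0 <= K)
  (phi_bounded : forall z, S z -> sqrmodc (phi z) <= K * sqnrm ip z).

Lemma bounded_ker_closed l : S l -> adherent ip (fun x => S x /\ phi x = 0) l -> phi l = 0.
Proof.
move=> Sl l_adh; apply/eqP; rewrite -sqrmodc_le0; apply/ler_addgt0Pr => e e_gt0.
have K1_gt0 : 0 < K + 1 by have := K_ge0; lra.
have eta_gt0 : 0 < Num.sqrt (e / (K + 1)) by rewrite sqrtr_gt0 divr_gt0.
have [m [[Sm phim] lm]] := l_adh _ eta_gt0.
rewrite -[phi l]subr0 -phim -(lin_opB linphi) //; apply: le_trans (phi_bounded (SB Sl Sm)) _.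
move: lm; rewrite nrm_lt // sqr_sqrtr ?ltr_pdivlMr //; last by rewrite divr_ge0 ?ltW.
have := sqnrm_ge0 (SB Sl Sm); have := K_ge0; nra.
Qed.

Lemma riesz_representation : exists2 u, S u & forall x, S x -> phi x = ip x u.
Proof.
have [[z [Sz phiz]]|phi0] := pselect (exists z, S z /\ phi z != 0); last first.
  exists 0; first by case: hS.
  move=> x Sx; rewrite ip0r //; apply/eqP/negPn/negP => phix; apply: phi0; by exists x.
pose M x := S x /\ phi x = 0.
have hM : is_subspace M.
  split=> [|a x y [Sx phix] [Sy phiy]]; first by split; [case: hS | exact: lin_op0 linphi].
  by split; [case: hS => _; apply | case: linphi => _ _ ->; rewrite // phix phiy addr0 scaler0].
have [l [Sl l_adh lperp]] := orthogonal_projection hM (fun x => @proj1 _ _) Sz.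
set r := z - l; have Sr : S r := SB Sz Sl.
have phir : phi r = phi z by rewrite /r (lin_opB linphi) // (bounded_ker_closed Sl l_adh) subr0.
have rr_neq0 : ip r r != 0.
  apply: contra phiz => /eqP rr0; case: hip => _ _ _ _ /(_ r Sr rr0) r0.
  by rewrite -phir r0 (lin_op0 linphi).
(* [r] is orthogonal to the kernel, and [x - (phi x / phi r) *: r] lies in it. *)
exists (conjc (phi r / ip r r) *: r) => [|x Sx]; first exact: SZ.
pose y := x - (phi x / phi r) *: r.
have My : M y.
  split; first by apply: SB => //; exact: SZ.
  rewrite (lin_opB linphi) ?(lin_opZ linphi) //; last exact: SZ.
  by rewrite -[_ *: phi r]/(_ * phi r) mulfVK ?phir // subrr.
have := lperp _ My; rewrite ipBl ?ipZl //; last exact: SZ.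
move=> /eqP; rewrite subr_eq0 => /eqP xr_eq.
by rewrite ipZr // conjcK xr_eq; field; rewrite rr_neq0 phir phiz.
Qed.

End BoundedFunctional.

End Complete.

End InnerProductOn.

Definition energy_ip (R : realType) (X Y : lmodType R[i]) (ipY : Y -> Y -> R[i])
  (A : X -> Y) (x y : X) : R[i] := ipY (A x) (A y).

Section EnergySpace.
Variables (R : realType) (X Y : lmodType R[i]) (ipX : X -> X -> R[i]) (ipY : Y -> Y -> R[i]).
Variables (domA : X -> Prop) (A : X -> Y) (c : R).
Hypotheses (hX : is_hilbert ipX) (hY : is_hilbert ipY) (linA : is_lin_op domA A)
  (closedA : closed_op ipX ipY domA A) (c_gt0 : 0 < c)
  (coerA : forall x, domA x -> c * nrm ipX x <= nrm ipY (A x)).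

Let ipX_on := inner_product_onT hX.1.
Let ipY_on := inner_product_onT hY.1.
Let hA := lin_op_subspace linA.

Lemma nrm_lt_of_energy x e : domA x -> nrm ipY (A x) < c * e -> nrm ipX x < e.
Proof. by move=> Ax /(le_lt_trans (coerA Ax)); rewrite ltr_pM2l. Qed.

Lemma energy_coercive x : domA x -> c ^+ 2 * sqnrm ipX x <= sqnrm ipY (A x).
Proof.
move=> Ax; rewrite -(sqr_nrm ipX_on) // -(sqr_nrm ipY_on) // -exprMn.
by rewrite ler_sqr ?nnegrE ?coerA ?nrm_ge0 // mulr_ge0 ?nrm_ge0 ?(ltW c_gt0).
Qed.

Lemma energy_inner_product : is_inner_product_on domA (energy_ip ipY A).
Proof.
case: ipY_on => _ ipYlin ipYsym ipYpos _.
split=> [|a x y z Ax Ay Az|x y _ _|x _|x Ax xx0]; [exact: hA | | exact: ipYsym | exact: ipYpos |].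
  rewrite /energy_ip (lin_opD linA) ?(lin_opZ linA) ?ipYlin //; exact: subspaceZ.
apply: (sqnrm_le0 ipX_on) => //; rewrite -(pmulr_rle0 _ (exprn_gt0 2 c_gt0)).
by apply: le_trans (energy_coercive Ax) _; rewrite /sqnrm -/(energy_ip ipY A x x) xx0.
Qed.

Lemma cvg_of_energy u x : (forall n, domA (u n)) -> domA x ->
  cvg_ip ipY (fun n => A (u n)) (A x) -> cvg_ip ipX u x.
Proof.
move=> Au Ax uAx e e_gt0; have [N hN] := uAx _ (mulr_gt0 c_gt0 e_gt0).
exists N => n leNn; apply: nrm_lt_of_energy; first exact: subspaceB.
by rewrite (lin_opB linA) ?hN.
Qed.

Lemma energy_complete : complete_on domA (energy_ip ipY A).
Proof.
move=> u Au ucauchy.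
have uAcauchy : cauchy_ip ipY (fun n => A (u n)).
  move=> e /ucauchy[N hN]; exists N => m n leNm leNn.
  by rewrite -(lin_opB linA) ?hN.
have ucauchyX : cauchy_ip ipX u.
  move=> e e_gt0; have [N hN] := ucauchy _ (mulr_gt0 c_gt0 e_gt0).
  exists N => m n leNm leNn; apply: nrm_lt_of_energy; first exact: subspaceB.
  exact: hN.
have [y _ uAy] := hilbert_completeT hY (fun=> I) uAcauchy.
have [x _ ux] := hilbert_completeT hX (fun=> I) ucauchyX.
have [Ax Axy] := closedA Au ux uAy.
exists x => // e /uAy[N hN]; exists N => n leNn.
by rewrite /nrm /energy_ip (lin_opB linA) // Axy hN.
Qed.

Lemma AstarA_surjective f : exists2 u, domA u & adj_graph ipX ipY domA A (A u) f.
Proof.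
pose phi : X -> R[i]^o := fun x => ipX x f.
have linphi : is_lin_op domA phi.
  split=> [|a x y Ax Ay|a x y _ _]; [by case: hA | exact: hA.2 |].
  by case: hX => -[ipXlin _ _ _] _; exact: ipXlin.
have bounded z : domA z -> sqrmodc (phi z) <= (sqnrm ipX f / c ^+ 2) * sqnrm (energy_ip ipY A) z.
  move=> Az; apply: le_trans (cauchy_schwarz ipX_on (I : True) (I : True)) _.
  rewrite mulrAC ler_pdivlMr ?exprn_gt0 // mulrAC [leRHS]mulrC.
  by apply: ler_wpM2r; [exact: (sqnrm_ge0 ipX_on) | rewrite mulrC; exact: energy_coercive].
have [|u Au urep] := riesz_representation energy_inner_product energy_complete linphi _ bounded.
  by rewrite divr_ge0 ?(sqnrm_ge0 ipX_on) ?exprn_ge0 ?ltW.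
by exists u => // x Ax; symmetry; exact: urep.
Qed.

End EnergySpace.

Section CalA.
Variables (R : realType) (X Y : lmodType R[i]) (ipX : X -> X -> R[i]) (ipY : Y -> Y -> R[i]).
Variables (domA : X -> Prop) (A : X -> Y) (c : R) (domB : Y -> Prop) (B : Y -> X).
Hypotheses (hX : is_hilbert ipX) (hY : is_hilbert ipY) (linA : is_lin_op domA A)
  (closedA : closed_op ipX ipY domA A) (c_gt0 : 0 < c)
  (coerA : forall x, domA x -> c * nrm ipX x <= nrm ipY (A x))
  (linB : is_lin_op domB B) (closedB : closed_op ipY ipX domB B)
  (AadjB : forall y z, adj_graph ipX ipY domA A y z -> domB y /\ B y = - z).

Let ipX_on := inner_product_onT hX.1.
Let ipY_on := inner_product_onT hY.1.
Let hA := lin_op_subspace linA.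
Local Notation ipZ := (Zh_ip ipX ipY A).

Lemma sqnrm_Zh p : sqnrm ipZ p = sqnrm ipY (A p.1) + sqnrm ipX p.2.
Proof. exact: raddfD. Qed.

Lemma nrm_Zh_lt p e : 0 < e -> nrm ipZ p < e -> nrm ipY (A p.1) < e /\ nrm ipX p.2 < e.
Proof.
move=> e_gt0; rewrite !nrm_lt // sqnrm_Zh.
have := sqnrm_ge0 ipY_on (x := A p.1) I; have := sqnrm_ge0 ipX_on (x := p.2) I.
move=> h2 h1 hsum; split; lra.
Qed.

Lemma nrm_Zh_lt_half p e : 0 < e ->
  nrm ipY (A p.1) < e / 2 -> nrm ipX p.2 < e / 2 -> nrm ipZ p < e.
Proof.
move=> e_gt0; rewrite !nrm_lt ?divr_gt0 // sqnrm_Zh.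
by rewrite expr_div_n; have := exprn_gt0 2 e_gt0; lra.
Qed.

Lemma cvg_Zh u p : (forall n, domA (u n).1) -> domA p.1 -> cvg_ip ipZ u p ->
  cvg_ip ipY (fun n => A (u n).1) (A p.1) /\ cvg_ip ipX (fun n => (u n).2) p.2.
Proof.
move=> Au Ap up; split=> e e_gt0; have [N hN] := up e e_gt0; exists N => n leNn.
  by rewrite -(lin_opB linA) //; case: (nrm_Zh_lt e_gt0 (hN n leNn)).
by case: (nrm_Zh_lt e_gt0 (hN n leNn)).
Qed.

Lemma calA_closed : closed_op_in ipZ (Zh_set domA) (calA_dom domA A domB) (calA A B).
Proof.
move=> u x y udom Ax Ay ux uy.
have [uA1 uA2 uB] : [/\ forall n, domA (u n).1, forall n, domA (u n).2 &
                       forall n, domB (A (u n).1)] by split=> n; case: (udom n).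
have [uAx u2x] := cvg_Zh uA1 Ax ux.
have [u2Ay uBAy] := cvg_Zh (u := calA A B \o u) uA2 Ay uy.
have x2E : x.2 = y.1.
  by apply: (cvg_ip_unique ipX_on) u2x _ => //; exact: (cvg_of_energy linA c_gt0 coerA) u2Ay.
have [BAx BAxE] := closedB uB uAx uBAy.
split; first by split; rewrite // x2E.
by rewrite /calA x2E BAxE -surjective_pairing.
Qed.

Let AstarA_onto := AstarA_surjective hX hY linA closedA c_gt0 coerA.

Lemma calA_dense : dense_in ipX (fun=> True) domA ->
  dense_in ipZ (Zh_set domA) (calA_dom domA A domB).
Proof.
move=> denseA [p1 p2] /= Ap1 e e_gt0; have e2_gt0 : 0 < e / 2 by rewrite divr_gt0.
pose M x := domA x /\ domB (A x).
have hM : is_subspace M.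
  split=> [|a x y [Ax BAx] [Ay BAy]]; first by rewrite /M (lin_op0 linA); case: hA; case: linB.
  split; first exact: hA.2.
  rewrite (lin_opD linA) ?(lin_opZ linA) //; last exact: subspaceZ.
  by case: linB => _ DBlin _; exact: DBlin.
have Mperp r : domA r -> (forall y, M y -> energy_ip ipY A y r = 0) -> r = 0.
  move=> Ar rperp; have [u Au uadj] := AstarA_onto r.
  have ur0 : energy_ip ipY A u r = 0 by apply: rperp; split=> //; case: (AadjB uadj).
  case: hX => -[_ ipXsym _ ipXdef] _; apply: ipXdef.
  by rewrite -uadj // (ipC ipY_on) // -/(energy_ip ipY A u r) ur0 conjc0.
have Mdense := dense_of_orthogonal_trivial (energy_inner_product hX hY linA c_gt0 coerA)
  (energy_complete hX hY linA closedA c_gt0 coerA) hM (fun _ => @proj1 _ _) Mperp.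
have [m [[Am BAm] p1m]] := Mdense p1 Ap1 _ e2_gt0.
have [q [Aq p2q]] := denseA p2 I _ e2_gt0.
exists (m, q); split; first by split.
by apply: nrm_Zh_lt_half => //=; rewrite -(lin_opB linA).
Qed.

Lemma calAs_sub_calA p w : domA p.1 -> domA p.2 -> adj_graph ipX ipY domA A (A p.1) w ->
  calA_dom domA A domB p /\ calA A B p = (p.2, - w).
Proof. by move=> Ap1 Ap2 /AadjB[BAp1 BAp1E]; split; [split | rewrite /calA BAp1E]. Qed.

Lemma calA_adjoint_sub v w : Zh_set domA v -> Zh_set domA w ->
  adj_graph ipZ ipZ (calA_dom domA A domB) (calA A B) v w ->
  calA_dom domA A domB v /\ calA A B v = - w.
Proof.
case: v w => [v1 v2] [w1 w2]; rewrite /Zh_set /= => Av1 Aw1 vw_adj.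
have [A0 B0] := (lin_op0 linA, lin_op0 linB).
have ipX0 z : ipX 0 z = 0 by exact: (ip0l ipX_on).
have ipY0 z : ipY 0 z = 0 by exact: (ip0l ipY_on).
have v1_adj : adj_graph ipX ipY domA A (A v1) w2.
  move=> x Ax; have := vw_adj (0, x); rewrite /Zh_ip /calA /= A0 B0 ipX0 ipY0.
  by rewrite add0r addr0; apply; split; rewrite //= ?A0; [case: hA | case: linB].
have [BAv1 BAv1E] := AadjB v1_adj.
have [u Au uadj] := AstarA_onto (v2 + w1); have [BAu BAuE] := AadjB uadj.
have v2w1 : v2 + w1 = 0.
  have u0_dom : calA_dom domA A domB (u, 0) by split=> //; case: hA.
  case: hX => -[_ _ _ ipXdef] _; apply: ipXdef.
  have := vw_adj _ u0_dom; rewrite /Zh_ip /calA /= A0 ipY0 ipX0 add0r addr0 BAuE.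
  rewrite (ipC ipY_on) // uadj // -(ipC ipX_on) // (ipNl ipX_on) // (ipDr ipX_on) //.
  by move=> <-; rewrite subrr.
have v2E : v2 = - w1 by apply/eqP; rewrite -addr_eq0 v2w1.
split; first by split; rewrite //= v2E; exact: subspaceN.
by rewrite /calA /= BAv1E v2E.
Qed.

End CalA.

Theorem lemma3p2 (R : realType) (X Y : lmodType R[i])
  (ipX : X -> X -> R[i]) (ipY : Y -> Y -> R[i])
  (hX : is_hilbert ipX) (hY : is_hilbert ipY)
  (domA : X -> Prop) (A : X -> Y)
  (linA : is_lin_op domA A)
  (denseA : dense_in ipX (fun _ => True) domA)
  (closedA : closed_op ipX ipY domA A)
  (c : R) (c_gt0 : 0 < c)
  (coerA : forall x, domA x -> c * nrm ipX x <= nrm ipY (A x))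
  (domB : Y -> Prop) (B : Y -> X)
  (linB : is_lin_op domB B)
  (denseB : dense_in ipY (fun _ => True) domB)
  (closedB : closed_op ipY ipX domB B)
  (AadjB : forall (y : Y) (z : X), adj_graph ipX ipY domA A y z ->
             domB y /\ B y = - z) :
  (* cal A is densely defined in Z_h *)
  dense_in (Zh_ip ipX ipY A) (Zh_set domA) (calA_dom domA A domB)
  (* cal A is closed in Z_h *)
  /\ closed_op_in (Zh_ip ipX ipY A) (Zh_set domA) (calA_dom domA A domB) (calA A B)
  (* cal A_s ⊂ cal A, where dom cal A_s = {(z1,z2) in X_h x X_h | z1 in dom (A^* A)}
     and cal A_s (z1,z2) = (z2, - A^* A z1) *)
  /\ (forall (p : X * X) (w : X), domA p.1 -> domA p.2 ->
        adj_graph ipX ipY domA A (A p.1) w ->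
        calA_dom domA A domB p /\ calA A B p = (p.2, - w))
  (* cal A^* ⊂ - cal A (adjoint in Z_h) *)
  /\ (forall v w : X * X, Zh_set domA v -> Zh_set domA w ->
        adj_graph (Zh_ip ipX ipY A) (Zh_ip ipX ipY A) (calA_dom domA A domB) (calA A B) v w ->
        calA_dom domA A domB v /\ calA A B v = - w).
Proof.
split; first exact: calA_dense hX hY linA closedA c_gt0 coerA linB AadjB denseA.
split; first exact: calA_closed hX hY linA c_gt0 coerA closedB.
split; first exact: calAs_sub_calA AadjB.
exact: calA_adjoint_sub hX hY linA closedA c_gt0 coerA linB AadjB.
Qed.
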